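(* Let $K\ge1$, $N\ge1$, $t\in\{0,1,\dots,K\}$, and for each file $i\in\{1,\dots,N\}$ and each subset $\mathcal{S}\subseteq\{1,\dots,K\}$ with $|\mathcal{S}|=t$ let $W_{i,\mathcal{S}}$ be a binary string, all of a common length. For a demand $\boldsymbol{d}=(d_1,\dots,d_K)\in\{1,\dots,N\}^K$ and a subset $\mathcal{A}\subseteq\{1,\dots,K\}$ with $|\mathcal{A}|=t+1$, define $Y_{\mathcal{A}}=\bigoplus_{x\in\mathcal{A}}W_{d_x,\mathcal{A}\setminus\{x\}}$ (bitwise XOR). Let $\mathcal{U}$ be a set of $N_{\mathrm{e}}(\boldsymbol{d})$ users requesting $N_{\mathrm{e}}(\boldsymbol{d})$ distinct files, where $N_{\mathrm{e}}(\boldsymbol{d})$ is the number of distinct entries of $\boldsymbol{d}$. Let $\mathcal{B}\subseteq\{1,\dots,K\}$ with $\mathcal{U}\subseteq\mathcal{B}$ and $|\mathcal{B}|=N_{\mathrm{e}}(\boldsymbol{d})+t+1$, and let $\mathcal{V}_{\mathrm{F}}$ be the family of all subsets $\mathcal{V}\subseteq\mathcal{B}$ such that each file requested in $\boldsymbol{d}$ is requested by exactly one user in $\mathcal{V}$. Then $$\bigoplus_{\mathcal{V}\in\mathcal{V}_{\mathrm{F}}}Y_{\mathcal{B}\setminus\mathcal{V}}=0.$$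
   Context: In the paper the strings $W_{i,\mathcal{S}}$ are the subfiles of the symmetric batch prefetching: file $i$ is split into $\binom{K}{t}$ equal-size parts indexed by the size-$t$ subsets $\mathcal{S}$ of users, and user $k$ caches all $W_{i,\mathcal{S}}$ with $k\in\mathcal{S}$. The users in $\mathcal{U}$ are called leaders. Note $|\mathcal{B}\setminus\mathcal{V}|=t+1$ for every $\mathcal{V}\in\mathcal{V}_{\mathrm{F}}$. *)

(* Users are 'I_K (0-indexed), files are 'I_N, bit positions 'I_L. *)
From mathcomp Require Import all_boot.
Set Implicit Arguments. Unset Strict Implicit. Unset Printing Implicit Defensive.

Definition bxor_big (L : nat) (I : finType) (P : pred I) (F : I -> 'I_L -> bool)
  : 'I_L -> bool := fun j => \big[addb/false]_(i | P i) F i j.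

Definition Ne (K N : nat) (d : 'I_K -> 'I_N) : nat := #|[set d k | k : 'I_K]|.

Definition Ycoded (K N L : nat) (W : 'I_N -> {set 'I_K} -> 'I_L -> bool)
  (d : 'I_K -> 'I_N) (A : {set 'I_K}) : 'I_L -> bool :=
  bxor_big (mem A) (fun x => W (d x) (A :\ x)).

Definition VF (K N : nat) (d : 'I_K -> 'I_N) (B : {set 'I_K}) : {set {set 'I_K}} :=
  [set V : {set 'I_K} | (V \subset B) &&
     [forall n in [set d k | k : 'I_K], #|[set k in V | d k == n]| == 1]].

From mathcomp Require Import all_boot.
From Stdlib Require Import FunctionalExtensionality.
Set Implicit Arguments. Unset Strict Implicit. Unset Printing Implicit Defensive.

(* Expanding each [Y_(B :\: V)], the sum runs over the pairs (V, x) with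
   V in V_F and x in B \ V, the pair contributing W_(d x, (B \ V) \ x).  Let
   y be the unique user of V requesting the file d x.  Exchanging x and y,
   (V, x) |-> (V \ y + x, y), is a fixed-point-free involution on these pairs
   that preserves the contributed subfile, so the contributions cancel in pairs. *)


Lemma big_addb_involution (T : finType) (P : pred T) (F : T -> bool) (f : T -> T) :
    {in P, forall p, f p \in P} -> {in P, involutive f} ->
    {in P, forall p, f p != p} -> {in P, forall p, F (f p) = F p} ->
  \big[addb/false]_(p | P p) F p = false.
Proof.
move=> Pf fK f_neq Ff; pose r (p : T) : nat := enum_rank p.
(* f maps the terms where the rank goes up along f onto those where it goes down. *)
rewrite (bigID (fun p => r p < r (f p))) /=.
rewrite [X in addb _ X](reindex_onto f f (fun p PQp => fK p (proj1 (andP PQp)))).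
rewrite -[RHS](addbb (\big[addb/false]_(p | P p && (r p < r (f p))) F p)).
congr addb; apply: eq_big => [p | p /andP[/andP[Pfp _] /eqP fpK]]; last first.
  by rewrite -(Ff _ Pfp) fpK.
have [Pp | nPp] := boolP (P p); last first.
  apply/negbTE; apply: contra nPp => /andP[/andP[/Pf Pffp _] /eqP ffp].
  by rewrite -ffp.
have -> : f p \in P := Pf p Pp.
rewrite fK // eqxx andbT -leqNgt leq_eqVlt.
suff /negbTE -> : r p != r (f p) by [].
by apply: contra (f_neq p Pp) => /eqP/ord_inj/enum_rank_inj pfp; rewrite -pfp.
Qed.

Section Exchange.

Variables (K N : nat) (d : 'I_K -> 'I_N) (B : {set 'I_K}).

Definition partner (V : {set 'I_K}) (x : 'I_K) : 'I_K :=
  odflt x [pick y in V | d y == d x].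

Definition exchange (V : {set 'I_K}) (x : 'I_K) : {set 'I_K} :=
  x |: (V :\ partner V x).

Lemma partnerE V x :
  V \in VF d B -> [set k in V | d k == d x] = [set partner V x].
Proof.
rewrite inE => /andP[_ /forallP/(_ (d x))].
rewrite imset_f // => /cards1P[y Vx_y].
rewrite /partner; case: pickP => [z Vz | noneV]; last first.
  by have := set11 y; rewrite -Vx_y inE noneV.
have : z \in [set k in V | d k == d x] by rewrite inE.
by rewrite Vx_y inE => /eqP->.
Qed.

Lemma partner_in V x : V \in VF d B -> partner V x \in V.
Proof. by move=> VV; have := set11 (partner V x); rewrite -partnerE // inE => /andP[]. Qed.

Lemma demand_partner V x : V \in VF d B -> d (partner V x) = d x.
Proof.
by move=> VV; have := set11 (partner V x); rewrite -partnerE // inE => /andP[_ /eqP].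
Qed.

Section ExchangeStep.

Variables (V : {set 'I_K}) (x : 'I_K).
Hypotheses (VV : V \in VF d B) (xBV : x \in B :\: V).

Let y := partner V x.

Lemma partner_neq : y != x.
Proof. by apply: contraTneq xBV => <-; rewrite inE partner_in. Qed.

Lemma demanders_exchange n :
  [set k in exchange V x | d k == n] =
  if n == d x then [set x] else [set k in V | d k == n].
Proof.
have xV : x \notin V by case/setDP: xBV.
apply/setP => k; case: (eqVneq n (d x)) => [-> | ndx]; rewrite !inE.
  case: (eqVneq k x) => [-> | _] /=; first by rewrite eqxx.
  apply/negbTE/andP => -[/andP[ky kV] dk].
  have : k \in [set k in V | d k == d x] by rewrite inE kV.
  by rewrite partnerE // inE (negbTE ky).
case: (eqVneq k x) => [-> | _] /=; first by rewrite (negbTE xV) eq_sym (negbTE ndx).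
case: (eqVneq k y) => [-> | _] //=.
by rewrite demand_partner // eq_sym (negbTE ndx) andbF.
Qed.

Lemma exchange_VF : exchange V x \in VF d B.
Proof.
move: VV; rewrite !inE => /andP[VB /forallP cardV]; apply/andP; split.
  apply/subsetP => k; rewrite !inE => /predU1P[-> | /andP[_ kV]].
    by case/setDP: xBV.
  exact: subsetP VB k kV.
apply/forallP => n; apply/implyP => n_req; rewrite demanders_exchange.
by case: ifP => _; [rewrite cards1 | exact: implyP (cardV n) n_req].
Qed.

Lemma partner_exchange : partner (exchange V x) y = x.
Proof.
have dy : d y = d x := demand_partner x VV.
have := partnerE y exchange_VF.
by rewrite demanders_exchange dy eqxx => /set1_inj <-.
Qed.

Lemma partner_notin_exchange : y \in B :\: exchange V x.
Proof.
have yV : y \in V := partner_in x VV.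
move: VV; rewrite !inE (negbTE partner_neq) eqxx /= => /andP[VB _].
exact: subsetP VB y yV.
Qed.

Lemma exchangeK : exchange (exchange V x) y = V.
Proof.
have xV : x \notin V by case/setDP: xBV.
have yV : y \in V := partner_in x VV.
apply/setP => k; rewrite {1}/exchange partner_exchange !inE.
case: (eqVneq k y) => [-> // | _] /=.
by case: (eqVneq k x) => [-> | _] /=; rewrite ?(negbTE xV).
Qed.

Lemma setD_exchange : (B :\: exchange V x) :\ y = (B :\: V) :\ x.
Proof.
have yV : y \in V := partner_in x VV.
apply/setP => k; rewrite !inE.
case: (eqVneq k y) => [-> | _] /=; first by rewrite yV andbF.
by case: (eqVneq k x).
Qed.

End ExchangeStep.

Definition VF_pair : pred ({set 'I_K} * 'I_K) :=
  [pred p | (p.1 \in VF d B) && (p.2 \in B :\: p.1)].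

Definition exchange_pair (p : {set 'I_K} * 'I_K) : {set 'I_K} * 'I_K :=
  (exchange p.1 p.2, partner p.1 p.2).

Lemma VF_pair_exchange : {in VF_pair, forall p, exchange_pair p \in VF_pair}.
Proof.
by move=> [V x] /andP[VV xBV]; rewrite inE /= exchange_VF // partner_notin_exchange.
Qed.

Lemma exchange_pairK : {in VF_pair, involutive exchange_pair}.
Proof.
by move=> [V x] /andP[VV xBV]; rewrite /exchange_pair /= partner_exchange // exchangeK.
Qed.

Lemma exchange_pair_neq : {in VF_pair, forall p, exchange_pair p != p}.
Proof.
by move=> [V x] /andP[VV xBV]; rewrite xpair_eqE negb_and partner_neq ?orbT.
Qed.

End Exchange.

Theorem lemma1 (K N t L : nat)
  (W : 'I_N -> {set 'I_K} -> 'I_L -> bool)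
  (d : 'I_K -> 'I_N) (U B : {set 'I_K}) :
  1 <= K -> 1 <= N -> t <= K ->
  #|U| = Ne d -> {in U &, injective d} ->
  U \subset B -> #|B| = Ne d + t + 1 ->
  bxor_big (mem (VF d B)) (fun V => Ycoded W d (B :\: V)) = (fun _ => false).
Proof.
(* The cancellation holds for every B. *)
move=> _ _ _ _ _ _ _; apply: functional_extensionality => j.
rewrite /bxor_big /Ycoded /bxor_big pair_big_dep /=.
apply: (big_addb_involution (P := VF_pair d B) (f := exchange_pair d)).
- exact: VF_pair_exchange.
- exact: exchange_pairK.
- exact: exchange_pair_neq.
- move=> [V x] /andP[VV xBV] /=.
  by rewrite (demand_partner x VV) setD_exchange.
Qed.
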